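(* Let $X$ be an infinite compact metrizable space and $h\colon X\to X$ a minimal homeomorphism. If $F\subset X$ is a thin closed set, then $F$ is universally null.
   Context: $M_h(X)$ denotes the set of $h$-invariant Borel probability measures on $X$; a Borel set is universally null if it has measure $0$ for all $\mu\in M_h(X)$. For $F\subset X$ closed and $U\subset X$ open, write $F\prec U$ if there exist $M\in\mathbb{N}$, open sets $U_0,\dots,U_M\subset X$ and integers $d(0),\dots,d(M)$ such that $F\subset\bigcup_{j=0}^M U_j$, $h^{d(j)}(U_j)\subset U$ for all $j$, and the sets $h^{d(j)}(U_j)$ are pairwise disjoint. A closed set $F$ is thin if $F\prec U$ for every non-empty open $U\subset X$. *)

From HB Require Import structures.
From mathcomp Require Import all_boot all_order all_algebra.
From mathcomp Require Import all_classical all_reals all_analysis.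
Set Implicit Arguments. Unset Strict Implicit. Unset Printing Implicit Defensive.
Import Order.TTheory GRing.Theory Num.Theory.
Local Open Scope classical_set_scope.
Local Open Scope ring_scope.

(* metric spaces with a distinguished point (needed by the library's
   generated sigma-algebra construction; harmless, X is nonempty anyway) *)
#[short(type="pointedMetricType")]
HB.structure Definition PointedMetric (K : numDomainType) :=
  { M of Metric K M & Pointed M }.

Section Defs.
Context {R : realType} {X : pointedMetricType R}.

Definition borelX : measurableType _ := g_sigma_algebraType (@open X).

Definition zpow (h hinv : X -> X) (d : int) : X -> X :=
  match d with
  | Posz n => iter n h
  | Negz n => iter n.+1 hinv
  end.

Definition minimal_map (h : X -> X) : Prop :=
  forall F : set X, closed F -> h @` F = F -> F = set0 \/ F = setT.

Definition prec (h hinv : X -> X) (F U : set X) : Prop :=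
  exists (M : nat) (V : nat -> set X) (d : nat -> int),
    [/\ (forall j, (j <= M)%N -> open (V j)),
        F `<=` \bigcup_(j in [set j | (j <= M)%N]) V j,
        (forall j, (j <= M)%N -> zpow h hinv (d j) @` V j `<=` U) &
        (forall i j, (i <= M)%N -> (j <= M)%N -> i <> j ->
           zpow h hinv (d i) @` V i `&` zpow h hinv (d j) @` V j = set0)].

Definition thin (h hinv : X -> X) (F : set X) : Prop :=
  closed F /\ forall U : set X, open U -> U !=set0 -> prec h hinv F U.

Definition invariant_measure (h : X -> X) (mu : probability borelX R) : Prop :=
  forall A : set borelX, measurable A -> mu (h @^-1` A) = mu A.

Definition universally_null (h : X -> X) (F : set X) : Prop :=
  measurable (F : set borelX) /\
  forall mu : probability borelX R, invariant_measure h mu -> mu F = 0%E.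

End Defs.

(** For an [h]-invariant measure [mu], every [h^d] maps open sets to open
    sets of the same measure, so [F ≺ U] gives
    [mu F <= \sum_j mu U_j = \sum_j mu (h^(d j) U_j) <= mu U], the last step by
    disjointness.  An infinite metric space contains [N] pairwise disjoint
    nonempty open sets for every [N]; a thin [F] is dominated by each of them,
    so [N * mu F <= 1] for all [N], and [mu F = 0]. *)

From HB Require Import structures.
From mathcomp Require Import all_boot all_order all_algebra.
From mathcomp Require Import all_classical all_reals all_analysis.
Import Order.TTheory GRing.Theory Num.Theory.
Local Open Scope classical_set_scope.
Local Open Scope ring_scope.
Set Implicit Arguments. Unset Strict Implicit.

Lemma image_can (T U : Type) (f : T -> U) (g : U -> T) (A : set T) :
  cancel f g -> cancel g f -> f @` A = g @^-1` A.
Proof.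
move=> fK gK; apply/seteqP; split => x /=; first by move=> [y Ay <-]; rewrite fK.
by move=> Agx; exists (g x); rewrite ?gK.
Qed.

Lemma disjoint_trivIset_I (T : Type) (F : nat -> set T) (n : nat) :
  (forall i j, (i < n)%N -> (j < n)%N -> i <> j -> F i `&` F j = set0) ->
  trivIset `I_n F.
Proof.
move=> disjF i j /= ilt jlt [x Fx]; apply: contrapT => ij.
by rewrite (disjF i j) in Fx.
Qed.

Lemma infinite_uniq_seq (T : eqType) (n : nat) :
  infinite_set [set: T] -> exists2 s : seq T, uniq s & size s = n.
Proof.
move=> Tinf; elim: n => [|n [s us <-]]; first by exists [::].
have [x xs] : exists x, x \notin s.
  apply: contrapT => allin; apply: Tinf.
  apply: (sub_finite_set _ (finite_seq s)) => x _ /=.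
  by apply: contrapT => /negP xs; apply: allin; exists x.
by exists (x :: s); rewrite /= ?xs.
Qed.

Section FinitelyManyPoints.
Context {R : realType} {X : pointedMetricType R}.

Lemma mdist_notin_seq_gt0 (s : seq X) (x : X) : x \notin s ->
  exists2 e : R, 0 < e & forall y, y \in s -> e <= mdist x y.
Proof.
elim: s => [|a s IH]; first by exists 1.
rewrite in_cons negb_or => /andP[xa /IH [e e0 He]].
exists (Num.min e (mdist x a)); first by rewrite lt_min e0 mdist_gt0.
move=> y; rewrite in_cons => /orP[/eqP->|ys]; first by rewrite ge_min lexx orbT.
by rewrite ge_min He.
Qed.

Lemma uniq_mdist_gt0 (s : seq X) : uniq s ->
  exists2 e : R, 0 < e &
    forall x y, x \in s -> y \in s -> x != y -> e <= mdist x y.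
Proof.
elim: s => [|a s IH]; first by exists 1.
move=> /= /andP[as_ /IH [e1 e10 He1]].
have [e2 e20 He2] := mdist_notin_seq_gt0 as_.
exists (Num.min e1 e2); first by rewrite lt_min e10.
move=> x y; rewrite !in_cons => /orP[/eqP->|xs] /orP[/eqP->|ys].
- by rewrite eqxx.
- by move=> _; rewrite ge_min He2 ?orbT.
- by move=> _; rewrite metric_sym ge_min He2 ?orbT.
- by move=> xy; rewrite ge_min He1.
Qed.

(* Open balls of radius [e/2] around [n] points at mutual distance [>= e]. *)
Lemma infinite_disjoint_open_family (n : nat) : infinite_set [set: X] ->
  exists U : nat -> set X,
    [/\ forall i, open (U i), forall i, U i !=set0 & trivIset `I_n U].
Proof.
move=> Xinf; have [s us sz] := infinite_uniq_seq n Xinf.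
have [e e0 He] := uniq_mdist_gt0 us.
have e20 : 0 < e / 2 by rewrite divr_gt0.
pose U i := (ball (nth point s i) (PosNum e20)%:num)°.
have oU i : open_nbhs (nth point s i) (U i).
  exact: open_nbhs_ball (nth point s i) (PosNum e20).
exists U; split => [i|i|]; first by case: (oU i).
  by exists (nth point s i); case: (oU i).
apply: disjoint_trivIset_I => i j ilt jlt ij; apply/seteqP; split => // z.
move=> [/interior_subset/= + /interior_subset/=]; rewrite !ballEmdist /= => zi zj.
have : e <= mdist (nth point s i) (nth point s j).
  by apply: He; rewrite ?mem_nth ?sz ?nth_uniq ?sz //; apply/eqP.
rewrite leNgt => /negP; apply.
apply: (le_lt_trans (metric_triangle _ z _)).
by rewrite (metric_sym z) [ltRHS]splitr ltrD.
Qed.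

End FinitelyManyPoints.

Lemma sum_trivIset_le_measure d (T : measurableType d) (R : realFieldType)
    (mu : {measure set T -> \bar R}) (A : nat -> set T) (B : set T) (n : nat) :
  (forall k, (k < n)%N -> measurable (A k)) -> trivIset `I_n A ->
  measurable B -> (forall k, (k < n)%N -> A k `<=` B) ->
  (\sum_(k < n) mu (A k) <= mu B)%E.
Proof.
move=> mA tA mB AB.
have mUA : measurable (\big[setU/set0]_(k < n) A k).
  by apply: bigsetU_measurable => k _; exact: mA.
rewrite -measure_semi_additive_ord_I //.
apply: le_measure; rewrite ?inE //.
by rewrite -bigcup_mkord => x [k /= kn]; exact: AB.
Qed.

Lemma natmul_le1_eq0 (R : realType) (x : \bar R) :
  (0 <= x)%E -> (forall N, x *+ N <= 1)%E -> x = 0%E.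
Proof.
case: x => [r||] //= r0 xN; last by have := xN 1%N.
rewrite lee_fin in r0; congr (_%:E).
apply/eqP; rewrite eq_le r0 andbT leNgt; apply/negP => rpos.
have := xN (Num.Def.trunc r^-1).+1; rewrite -EFin_natmul lee_fin leNgt => /negP; apply.
by have := truncnS_gt r^-1; rewrite -(ltr_pM2l rpos) mulfV ?gt_eqF // mulr_natr.
Qed.

Lemma borelX_open_measurable (R : realType) (X : pointedMetricType R) (W : set X) :
  open W -> measurable (W : set (@borelX R X)).
Proof. exact: sub_gen_smallest. Qed.

Lemma borelX_closed_measurable (R : realType) (X : pointedMetricType R) (F : set X) :
  closed F -> measurable (F : set (@borelX R X)).
Proof.
move=> cF; rewrite -(setCK F); apply: measurableC.
by apply: borelX_open_measurable; rewrite openC.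
Qed.

Section InvariantMeasure.
Context {R : realType} {X : pointedMetricType R} (h hinv : X -> X).
Hypotheses (hK : cancel h hinv) (hinvK : cancel hinv h).
Hypotheses (hcont : continuous h) (hinvcont : continuous hinv).
Variable mu : probability (@borelX R X) R.
Hypothesis muinv : invariant_measure h mu.

Definition open_measure_preserving (g : X -> X) : Prop :=
  forall W, open W -> open (g @` W) /\ mu (g @` W) = mu W.

Lemma open_measure_preserving_iter (g : X -> X) (n : nat) :
  open_measure_preserving g -> open_measure_preserving (iter n g).
Proof.
move=> Pg; elim: n => [|n IH] W oW; first by rewrite image_id.
have -> : iter n.+1 g = g \o iter n g by [].
rewrite -image_comp; have [oW' <-] := IH W oW.
exact: Pg.
Qed.

Lemma open_measure_preserving_h : open_measure_preserving h.
Proof.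
move=> W oW; rewrite (image_can _ hK hinvK).
have oW' : open (hinv @^-1` W) by exact: (proj1 (continuousP _) hinvcont).
split => //; rewrite -muinv; last exact: borelX_open_measurable.
by congr (mu _); apply/seteqP; split => x /=; rewrite hK.
Qed.

Lemma open_measure_preserving_hinv : open_measure_preserving hinv.
Proof.
move=> W oW; rewrite (image_can _ hinvK hK).
split; first exact: (proj1 (continuousP _) hcont).
by rewrite muinv //; exact: borelX_open_measurable.
Qed.

Lemma open_measure_preserving_zpow (d : int) :
  open_measure_preserving (zpow h hinv d).
Proof.
case: d => n; apply: open_measure_preserving_iter.
  exact: open_measure_preserving_h.
exact: open_measure_preserving_hinv.
Qed.

Lemma prec_measure_le (F U : set X) :
  measurable (F : set (@borelX R X)) -> open U ->
  prec h hinv F U -> (mu F <= mu U)%E.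
Proof.
move=> mF oU [M [V [d [oV FV VU disj]]]].
pose W k := zpow h hinv (d k) @` V k.
have mV k : (k < M.+1)%N -> measurable (V k : set (@borelX R X)).
  by move=> kM; apply: borelX_open_measurable; exact: oV.
have hW k : (k < M.+1)%N -> open (W k) /\ mu (W k) = mu (V k).
  by move=> kM; apply: open_measure_preserving_zpow; exact: oV.
apply: (@le_trans _ _ (\sum_(k < M.+1) mu (V k))%E).
  by apply: content_subadditive => //; rewrite -bigcup_mkord.
rewrite (eq_bigr (fun k : 'I_M.+1 => mu (W k))); last first.
  by move=> k _; rewrite (hW k (ltn_ord k)).2.
apply: (sum_trivIset_le_measure mu (A := W)).
- by move=> k kM; apply: borelX_open_measurable; exact: (hW k kM).1.
- exact: disjoint_trivIset_I.
- exact: borelX_open_measurable.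
- exact: VU.
Qed.

End InvariantMeasure.

Theorem lemma3p6 (R : realType) (X : pointedMetricType R) (h hinv : X -> X)
  (hK : cancel h hinv) (hinvK : cancel hinv h)
  (hcont : continuous h) (hinvcont : continuous hinv)
  (Xcpt : compact [set: X]) (Xinf : infinite_set [set: X])
  (hmin : minimal_map h) (F : set X) (Fthin : thin h hinv F) :
  universally_null h F.
Proof.
have [Fclosed Fprec] := Fthin.
have mF := borelX_closed_measurable Fclosed.
split => // mu muinv; apply: natmul_le1_eq0 (measure_ge0 mu F) _ => N.
have [U [oU U0 tU]] := infinite_disjoint_open_family N Xinf.
have -> : (mu F *+ N = \sum_(i < N) mu F)%E by rewrite sumr_const card_ord.
rewrite -(probability_setT mu).
apply: (@le_trans _ _ (\sum_(i < N) mu (U i))%E).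
  apply: lee_sum => i _.
  by have := prec_measure_le hK hinvK hcont hinvcont muinv mF (oU i) (Fprec _ (oU i) (U0 i)).
apply: sum_trivIset_le_measure => // k _; exact: borelX_open_measurable.
Qed.
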